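(* Assume $(H_S(\infty))$, and for $\lambda\in(0,1]$ let $\mathbf a_\lambda>0$ be the unique solution of $\lambda\mathbf a_\lambda=\nu_S((\mathbf a_\lambda,\infty))$ and $\mathbf n_\lambda=\lfloor 1/(\lambda\mathbf a_\lambda)\rfloor$. Then there exists a function $\lambda\mapsto\mathbf m_\lambda$ from $(0,1]$ to $\mathbb{N}$ which is non-increasing and satisfies $\lim_{\lambda\to0}\mathbf m_\lambda=\infty$, $\lim_{\lambda\to0}\mathbf m_\lambda/\mathbf n_\lambda=0$, and for every $z\in[0,1)$, $\lim_{\lambda\to0}\mathbf m_\lambda\,\nu_S((\mathbf a_\lambda z,\infty))=\infty$.
   Context: $(H_S(\infty))$: $\mu_S$ is a probability measure on $(0,\infty)$ with unbounded support and finite mean $m_S$; with $\nu_S(dt)=m_S^{-1}\mu_S((t,\infty))dt$, for all $t>0$, $\lim_{x\to\infty}\nu_S((x,\infty))/\nu_S((tx,\infty))=t^\infty$, where $t^\infty=0$ for $t<1$, $1^\infty=1$, $t^\infty=\infty$ for $t>1$. (The map $a\mapsto a/\nu_S((a,\infty))$ is an increasing continuous bijection of $(0,\infty)$, so $\mathbf a_\lambda$ is well defined and $\mathbf a_\lambda\to\infty$ as $\lambda\to0$.) *)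

From Stdlib Require Export Reals.
Open Scope R_scope.

Definition improper_int_from (f : R -> R) (x L : R) : Prop :=
  (forall y, x <= y -> exists _ : Riemann_integrable f x y, True) /\
  (forall eps, 0 < eps -> exists Y, forall y (pr : Riemann_integrable f x y),
      x <= y -> Y <= y -> Rabs (RiemannInt pr - L) < eps).

(* Fbar is the survival function t |-> mu((t,oo)) of a probability measure mu
   on (0,oo): non-increasing, right-continuous, equal to 1 on (-oo,0],
   tending to 0 at +oo (distribution functions <-> probability measures). *)
Definition is_survival_fun_pos (Fbar : R -> R) : Prop :=
  (forall s t, s <= t -> Fbar t <= Fbar s) /\
  (forall t eps, 0 < eps -> exists delta, 0 < delta /\
      forall s, t < s < t + delta -> Rabs (Fbar s - Fbar t) < eps) /\
  (forall t, t <= 0 -> Fbar t = 1) /\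
  (forall eps, 0 < eps -> exists T, forall t, T <= t -> Fbar t < eps).

Definition unbounded_support (Fbar : R -> R) : Prop := forall t, 0 < Fbar t.

Definition has_mean (Fbar : R -> R) (m : R) : Prop := improper_int_from Fbar 0 m.

(* G x = nu((x,oo)) = m^{-1} \int_x^oo mu((t,oo)) dt, for x >= 0 *)
Definition is_nu_tail (Fbar : R -> R) (m : R) (G : R -> R) : Prop :=
  forall x, 0 <= x -> exists I, improper_int_from Fbar x I /\ G x = I / m.

(* lim_{x->oo} G x / G (t x) = t^oo *)
Definition H_S_infty_ratio (G : R -> R) : Prop :=
  forall t, 0 < t ->
    (t < 1 -> forall eps, 0 < eps -> exists X, forall x, X <= x ->
        Rabs (G x / G (t * x)) < eps) /\
    (t = 1 -> forall eps, 0 < eps -> exists X, forall x, X <= x ->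
        Rabs (G x / G (t * x) - 1) < eps) /\
    (1 < t -> forall M, exists X, forall x, X <= x -> M <= G x / G (t * x)).

Definition H_S_infty (Fbar : R -> R) (m : R) (G : R -> R) : Prop :=
  is_survival_fun_pos Fbar /\ unbounded_support Fbar /\ has_mean Fbar m /\
  is_nu_tail Fbar m G /\ H_S_infty_ratio G.

Definition lim0_infty (h : R -> R) : Prop :=
  forall M, exists delta, 0 < delta /\
    forall l, 0 < l <= 1 -> l < delta -> M <= h l.

Definition lim0_zero (h : R -> R) : Prop :=
  forall eps, 0 < eps -> exists delta, 0 < delta /\
    forall l, 0 < l <= 1 -> l < delta -> Rabs (h l) < eps.

Definition n_of (a : R -> R) (l : R) : R := IZR (Int_part (1 / (l * a l))).

(* By (H_S(oo)), G (a_l) / G (t a_l) -> 0 for every t < 1, where G = nu_S((., oo)),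
   and a_l -> oo as l -> 0.  Diagonalising over t = k / (k + 1) yields a
   non-increasing index K_l -> oo with K_l^2 G (a_l) < G (z_K a_l), z_K = K_l / (K_l + 1).
   Put m_l = floor (K_l / G (z_K a_l)).  For z <= z_K, m_l G (z a_l) >= K_l - G 0;
   and since l a_l = G (a_l), n_l is about 1 / G (a_l), so
   m_l / n_l is about K_l G (a_l) / G (z_K a_l) < 1 / K_l.  Every ingredient is
   monotone in l, hence so is m_l. *)

From Stdlib Require Import Reals Lra Lia ZArith Classical ClassicalEpsilon.
Open Scope R_scope.

Section ImproperIntegral.

Variable f : R -> R.
Hypothesis f_ge0 : forall t, 0 <= f t.
Hypothesis f_antitone : forall s t, s <= t -> f t <= f s.

Lemma improper_int_ge x L c Y0 : improper_int_from f x L ->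
  (forall y (pr : Riemann_integrable f x y), x <= y -> Y0 <= y -> c <= RiemannInt pr) ->
  c <= L.
Proof.
intros [Hint Hlim] Hc.
destruct (Rle_or_lt c L) as [|hLc]; [assumption|].
destruct (Hlim (c - L)) as [Y HY]; [lra|].
set (y := Rmax (Rmax Y Y0) x).
assert (hY : Y <= y) by (unfold y; eapply Rle_trans; apply Rmax_l).
assert (hY0 : Y0 <= y) by (unfold y; eapply Rle_trans; [apply Rmax_r|apply Rmax_l]).
assert (hx : x <= y) by (unfold y; apply Rmax_r).
destruct (Hint y hx) as [pr _].
specialize (HY y pr hx hY). specialize (Hc y pr hx hY0).
apply Rabs_def2 in HY. lra.
Qed.

Lemma RiemannInt_le_restrict_left x c y
    (pr : Riemann_integrable f x y) (pr' : Riemann_integrable f c y) :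
  x <= c <= y -> RiemannInt pr' <= RiemannInt pr.
Proof.
intros Hc.
pose (pr1 := RiemannInt_P22 pr Hc). pose (pr2 := RiemannInt_P23 pr Hc).
rewrite <- (RiemannInt_P26 pr1 pr2 pr), (RiemannInt_P5 pr' pr2).
assert (E := RiemannInt_P15 (RiemannInt_P14 x c 0)).
assert (H := RiemannInt_P19 (RiemannInt_P14 x c 0) pr1 (proj1 Hc) (fun t _ => f_ge0 t)).
unfold fct_cte in *. lra.
Qed.

Lemma RiemannInt_ge_antitone x y (pr : Riemann_integrable f x y) :
  x + 1 <= y -> f (x + 1) <= RiemannInt pr.
Proof.
intros hy.
assert (Hc : x <= x + 1 <= y) by lra.
pose (pr1 := RiemannInt_P22 pr Hc). pose (pr2 := RiemannInt_P23 pr Hc).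
rewrite <- (RiemannInt_P26 pr1 pr2 pr).
assert (E := RiemannInt_P15 (RiemannInt_P14 (x + 1) y 0)).
assert (H := RiemannInt_P19 (RiemannInt_P14 (x + 1) y 0) pr2 (proj2 Hc) (fun t _ => f_ge0 t)).
assert (E' := RiemannInt_P15 (RiemannInt_P14 x (x + 1) (f (x + 1)))).
assert (H' : RiemannInt (RiemannInt_P14 x (x + 1) (f (x + 1))) <= RiemannInt pr1).
{ apply RiemannInt_P19; [lra|]. intros t ht. apply f_antitone. lra. }
unfold fct_cte in *. lra.
Qed.

Lemma improper_int_gt0 x L : (forall t, 0 < f t) -> improper_int_from f x L -> 0 < L.
Proof.
intros f_gt0 HI. apply Rlt_le_trans with (f (x + 1)); [apply f_gt0|].
apply (improper_int_ge x L _ (x + 1) HI).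
intros y pr _ hy. exact (RiemannInt_ge_antitone x y pr hy).
Qed.

Lemma improper_int_antitone x x' L L' :
  improper_int_from f x L -> improper_int_from f x' L' -> x <= x' -> L' <= L.
Proof.
intros [Hint Hlim] [Hint' Hlim'] hx.
destruct (Rle_or_lt L' L) as [|hL]; [assumption|].
destruct (Hlim ((L' - L) / 2)) as [Y1 HY1]; [lra|].
destruct (Hlim' ((L' - L) / 2)) as [Y2 HY2]; [lra|].
set (y := Rmax (Rmax Y1 Y2) x').
assert (h1 : Y1 <= y) by (unfold y; eapply Rle_trans; apply Rmax_l).
assert (h2 : Y2 <= y) by (unfold y; eapply Rle_trans; [apply Rmax_r|apply Rmax_l]).
assert (hx' : x' <= y) by (unfold y; apply Rmax_r).
assert (hxy : x <= y) by lra.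
destruct (Hint y hxy) as [pr _]. destruct (Hint' y hx') as [pr' _].
specialize (HY1 y pr hxy h1). specialize (HY2 y pr' hx' h2).
assert (Hle := RiemannInt_le_restrict_left x x' y pr pr' (conj hx hx')).
apply Rabs_def2 in HY1. apply Rabs_def2 in HY2. lra.
Qed.

End ImproperIntegral.

Section NuTail.

Variables (Fbar : R -> R) (m : R) (G : R -> R).
Hypothesis Fbar_gt0 : forall t, 0 < Fbar t.
Hypothesis Fbar_antitone : forall s t, s <= t -> Fbar t <= Fbar s.
Hypothesis Fbar_mean : has_mean Fbar m.
Hypothesis G_tail : is_nu_tail Fbar m G.

Let Fbar_ge0 t : 0 <= Fbar t := Rlt_le _ _ (Fbar_gt0 t).

Let mean_gt0 : 0 < m := improper_int_gt0 Fbar Fbar_ge0 Fbar_antitone 0 m Fbar_gt0 Fbar_mean.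

Lemma nu_tail_gt0 x : 0 <= x -> 0 < G x.
Proof.
intros hx. destruct (G_tail x hx) as [I [HI ->]].
apply Rdiv_lt_0_compat; [|exact mean_gt0].
exact (improper_int_gt0 Fbar Fbar_ge0 Fbar_antitone x I Fbar_gt0 HI).
Qed.

Lemma nu_tail_antitone x y : 0 <= x -> x <= y -> G y <= G x.
Proof.
intros hx hxy.
destruct (G_tail x hx) as [I [HI ->]].
destruct (G_tail y (Rle_trans _ _ _ hx hxy)) as [I' [HI' ->]].
apply Rmult_le_compat_r; [left; apply Rinv_0_lt_compat, mean_gt0|].
exact (improper_int_antitone Fbar Fbar_ge0 x y I I' HI HI' hxy).
Qed.

End NuTail.

Definition grid (k : nat) : R := 1 - / (INR k + 1).

Lemma grid_ge0 k : 0 <= grid k.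
Proof.
unfold grid. assert (1 <= INR k + 1) by (generalize (pos_INR k); lra).
assert (/ (INR k + 1) <= 1) by (rewrite <- Rinv_1; apply Rinv_le_contravar; lra). lra.
Qed.

Lemma grid_gt0 j : 0 < grid (S j).
Proof.
unfold grid. rewrite S_INR. generalize (pos_INR j); intro.
assert (/ (INR j + 1 + 1) < 1) by (rewrite <- Rinv_1; apply Rinv_lt_contravar; lra). lra.
Qed.

Lemma grid_lt1 k : grid k < 1.
Proof.
unfold grid. generalize (pos_INR k); intro.
assert (0 < / (INR k + 1)) by (apply Rinv_0_lt_compat; lra). lra.
Qed.

Lemma grid_le i j : (i <= j)%nat -> grid i <= grid j.
Proof.
intros h. unfold grid. apply le_INR in h. generalize (pos_INR i); intro.
assert (/ (INR j + 1) <= / (INR i + 1)) by (apply Rinv_le_contravar; lra). lra.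
Qed.

Lemma grid_eventually_ge t : t < 1 -> exists k0, forall k, (k0 <= k)%nat -> t <= grid k.
Proof.
intros ht. destruct (INR_unbounded (/ (1 - t))) as [k0 hk0]. exists k0. intros k hk.
apply Rle_trans with (grid k0); [|now apply grid_le].
unfold grid. assert (0 < / (1 - t)) by (apply Rinv_0_lt_compat; lra).
assert (hlt : / (INR k0 + 1) < / / (1 - t)) by (apply Rinv_lt_contravar; nra).
rewrite Rinv_inv in hlt. lra.
Qed.

(* [thresholds d] decreases to 0 below [d]; a slow index [K l] is the position
   of [l] among the thresholds. *)
Fixpoint thresholds (d : nat -> R) (k : nat) : R :=
  match k with
  | O => 2
  | S j => Rmin (thresholds d j) (Rmin (d j) (/ (INR j + 2)))
  end.

Lemma thresholds_S d j :
  thresholds d (S j) <= thresholds d j /\ thresholds d (S j) <= d j /\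
  thresholds d (S j) <= / (INR j + 2).
Proof.
simpl. split; [apply Rmin_l|].
split; eapply Rle_trans; try apply Rmin_r; try apply Rmin_l; apply Rmin_r.
Qed.

Lemma thresholds_antitone d i j : (i <= j)%nat -> thresholds d j <= thresholds d i.
Proof.
induction 1; [lra|].
eapply Rle_trans; [apply (proj1 (thresholds_S d m))|exact IHle].
Qed.

Lemma thresholds_gt0 d k : (forall j, 0 < d j) -> 0 < thresholds d k.
Proof.
intros hd. induction k; simpl; [lra|].
assert (0 < / (INR k + 2)) by (apply Rinv_0_lt_compat; generalize (pos_INR k); lra).
apply Rmin_glb_lt; [assumption|apply Rmin_glb_lt; auto].
Qed.

Lemma thresholds_bracket d l : 0 < l <= 1 ->
  exists k, l < thresholds d k /\ thresholds d (S k) <= l.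
Proof.
intros hl. destruct (INR_unbounded (/ l)) as [n hn].
assert (hn' : thresholds d (S n) <= l).
{ destruct (thresholds_S d n) as [_ [_ h]].
  assert (0 < / l) by (apply Rinv_0_lt_compat; lra).
  assert (hlt : / (INR n + 2) < / / l) by (apply Rinv_lt_contravar; nra).
  rewrite Rinv_inv in hlt. lra. }
assert (h0 : l < thresholds d 0) by (simpl; lra).
clear hn. induction (S n) as [|k IH]; [lra|].
destruct (Rlt_or_le l (thresholds d k)) as [hk|hk]; [now exists k|now apply IH].
Qed.

Lemma diagonal_index (d : nat -> R) : (forall j, 0 < d j) ->
  exists K : R -> nat,
    (forall l1 l2, 0 < l1 -> l1 <= l2 -> l2 <= 1 -> (K l2 <= K l1)%nat) /\
    (forall k, exists delta, 0 < delta /\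
       forall l, 0 < l <= 1 -> l < delta -> (k <= K l)%nat) /\
    (forall l j, 0 < l <= 1 -> (j < K l)%nat -> l < d j).
Proof.
intros hd.
destruct (choice (fun l k => 0 < l <= 1 -> l < thresholds d k /\ thresholds d (S k) <= l))
  as [K HK].
{ intros l. destruct (classic (0 < l <= 1)) as [hl|hl].
  - destruct (thresholds_bracket d l hl) as [k hk]. now exists k.
  - exists O. now intros. }
assert (K_ge : forall l j, 0 < l <= 1 -> l < thresholds d j -> (j <= K l)%nat).
{ intros l j hl hj. destruct (Nat.le_gt_cases j (K l)) as [|hlt]; [assumption|].
  destruct (HK l hl) as [_ h].
  assert (thresholds d j <= thresholds d (S (K l))) by (apply thresholds_antitone; lia).
  lra. }
exists K. split; [|split].
- intros l1 l2 h1 h12 h2. apply K_ge; [lra|]. destruct (HK l2) as [h _]; lra.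
- intros k. exists (thresholds d k). split; [now apply thresholds_gt0|].
  intros l hl hlt. now apply K_ge.
- intros l j hl hj. destruct (HK l hl) as [h _].
  assert (thresholds d (K l) <= thresholds d (S j)) by (apply thresholds_antitone; lia).
  destruct (thresholds_S d j) as [_ [hdj _]]. lra.
Qed.

Definition nat_floor (x : R) : nat := Z.to_nat (Int_part x).

Lemma nat_floor_spec x : 0 <= x -> x - 1 < INR (nat_floor x) <= x.
Proof.
intros hx. unfold nat_floor. destruct (base_Int_part x) as [h1 h2].
assert (hz : (0 <= Int_part x)%Z).
{ assert (-1 < Int_part x)%Z by (apply lt_IZR; simpl; lra). lia. }
rewrite INR_IZR_INZ, Z2Nat.id by exact hz. lra.
Qed.

Lemma nat_floor_le x y : 0 <= x -> x <= y -> (nat_floor x <= nat_floor y)%nat.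
Proof.
intros hx hxy. destruct (nat_floor_spec x hx) as [_ hx'].
destruct (nat_floor_spec y) as [hy _]; [lra|].
assert (hlt : INR (nat_floor x) < INR (S (nat_floor y))) by (rewrite S_INR; lra).
apply INR_lt in hlt. lia.
Qed.

Lemma ratio_bound m n g h N : 0 < g < / 2 -> 0 < h -> 0 < N ->
  0 <= m <= N / h -> / g - 1 < n -> g * N ^ 2 < h -> 0 <= m / n < 2 / N.
Proof.
intros [hg0 hg2] hh hN [hm0 hmN] hn hgN.
assert (hig : 2 < / g).
{ rewrite <- (Rinv_inv 2). apply Rinv_lt_contravar; lra. }
assert (hn0 : 0 < n) by lra.
assert (h2gn : 1 < 2 * g * n).
{ assert (g * / g = 1) by (field; repeat split; lra). nra. }
split; [unfold Rdiv; apply Rmult_le_pos; [lra|left; now apply Rinv_0_lt_compat]|].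
apply Rle_lt_trans with (N / h / n).
- unfold Rdiv. apply Rmult_le_compat_r; [left; now apply Rinv_0_lt_compat|exact hmN].
- apply (Rmult_lt_reg_r (h * n * N)); [apply Rmult_lt_0_compat; [apply Rmult_lt_0_compat|]; lra|].
  replace (N / h / n * (h * n * N)) with (N * N) by (field; repeat split; lra).
  replace (2 / N * (h * n * N)) with (2 * h * n) by (field; repeat split; lra).
  assert (0 < (h - g * N ^ 2) * n) by (apply Rmult_lt_0_compat; lra).
  assert (0 < (2 * g * n - 1) * (N * N)) by (apply Rmult_lt_0_compat; nra).
  nra.
Qed.

Section ScaleSequence.

Variables G a : R -> R.
Hypothesis G_gt0 : forall x, 0 <= x -> 0 < G x.
Hypothesis G_antitone : forall x y, 0 <= x -> x <= y -> G y <= G x.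
Hypothesis a_spec : forall l, 0 < l <= 1 -> 0 < a l /\ l * a l = G (a l).

Lemma a_antitone l1 l2 : 0 < l1 -> l1 <= l2 -> l2 <= 1 -> a l2 <= a l1.
Proof.
intros h1 h12 h2.
destruct (a_spec l1) as [p1 e1]; [lra|]. destruct (a_spec l2) as [p2 e2]; [lra|].
destruct (Rle_or_lt (a l2) (a l1)) as [|h]; [assumption|].
assert (G (a l2) <= G (a l1)) by (apply G_antitone; lra).
assert (l1 * a l1 < l1 * a l2) by (apply Rmult_lt_compat_l; lra).
assert (l1 * a l2 <= l2 * a l2) by (apply Rmult_le_compat_r; lra).
lra.
Qed.

(* If [a l < B] then [l * B > l * a l = G (a l) >= G B]. *)
Lemma a_unbounded B : exists delta, 0 < delta /\
  forall l, 0 < l <= 1 -> l < delta -> B <= a l.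
Proof.
set (B' := Rabs B + 1).
assert (hB : 0 < B') by (unfold B'; generalize (Rabs_pos B); lra).
assert (hG := G_gt0 B' (Rlt_le _ _ hB)).
exists (G B' / B'). split; [now apply Rdiv_lt_0_compat|].
intros l hl hd. destruct (a_spec l hl) as [pa ea].
destruct (Rle_or_lt B' (a l)) as [h|h].
- generalize (Rle_abs B). unfold B' in h. lra.
- assert (G B' <= G (a l)) by (apply G_antitone; lra).
  assert (l * B' < G B').
  { apply (Rmult_lt_compat_r B') in hd; [|lra]. unfold Rdiv in hd.
    rewrite Rmult_assoc, Rinv_l, Rmult_1_r in hd; lra. }
  assert (l * a l < l * B') by (apply Rmult_lt_compat_l; lra).
  lra.
Qed.

Lemma G_ratio_small t C : H_S_infty_ratio G -> 0 < t < 1 ->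
  exists delta, 0 < delta /\
    forall l, 0 < l <= 1 -> l < delta -> C * G (a l) < G (a l * t).
Proof.
intros Hratio [ht0 ht1].
set (C' := Rabs C + 1).
assert (hC : 0 < C') by (unfold C'; generalize (Rabs_pos C); lra).
destruct (proj1 (Hratio t ht0) ht1 (/ C')) as [X HX]; [now apply Rinv_0_lt_compat|].
destruct (a_unbounded X) as [delta [hdelta Hdelta]].
exists delta. split; [assumption|].
intros l hl hld. specialize (HX (a l) (Hdelta l hl hld)).
destruct (a_spec l hl) as [pa _].
assert (hGa := G_gt0 (a l) (Rlt_le _ _ pa)).
assert (hGt : 0 < G (t * a l)) by (apply G_gt0; nra).
rewrite (Rmult_comm (a l) t).
assert (hq : G (a l) / G (t * a l) < / C') by (eapply Rle_lt_trans; [apply Rle_abs|exact HX]).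
assert (C' * G (a l) < G (t * a l)).
{ apply (Rmult_lt_reg_r (/ (C' * G (t * a l)))); [apply Rinv_0_lt_compat; nra|].
  replace (C' * G (a l) * / (C' * G (t * a l))) with (G (a l) / G (t * a l))
    by (field; repeat split; lra).
  replace (G (t * a l) * / (C' * G (t * a l))) with (/ C') by (field; repeat split; lra).
  exact hq. }
assert (C * G (a l) <= C' * G (a l)).
{ apply Rmult_le_compat_r; [lra|]. generalize (Rle_abs C). unfold C'. lra. }
lra.
Qed.

Lemma slow_index : H_S_infty_ratio G ->
  exists K : R -> nat,
    (forall l1 l2, 0 < l1 -> l1 <= l2 -> l2 <= 1 -> (K l2 <= K l1)%nat) /\
    (forall k, exists delta, 0 < delta /\
       forall l, 0 < l <= 1 -> l < delta -> (k <= K l)%nat) /\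
    (forall l, 0 < l <= 1 -> G (a l) * INR (K l) ^ 2 < G (a l * grid (K l))).
Proof.
intros Hratio.
destruct (choice (fun j delta => 0 < delta /\ forall l, 0 < l <= 1 -> l < delta ->
    INR (S j) ^ 2 * G (a l) < G (a l * grid (S j)))) as [d Hd].
{ intros j. apply (G_ratio_small _ _ Hratio). split; [apply grid_gt0|apply grid_lt1]. }
destruct (diagonal_index d (fun j => proj1 (Hd j))) as [K [K_anti [K_unb K_lt]]].
exists K. split; [exact K_anti|split; [exact K_unb|]].
intros l hl. destruct (K l) as [|j] eqn:EK.
- simpl. rewrite Rmult_0_l, Rmult_0_r.
  apply G_gt0, Rmult_le_pos; [apply Rlt_le, a_spec, hl|apply grid_ge0].
- rewrite Rmult_comm. apply (Hd j); [exact hl|]. apply K_lt; [exact hl|]. rewrite EK. lia.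
Qed.

Variable K : R -> nat.
Hypothesis K_antitone : forall l1 l2, 0 < l1 -> l1 <= l2 -> l2 <= 1 -> (K l2 <= K l1)%nat.
Hypothesis K_unbounded : forall k, exists delta, 0 < delta /\
  forall l, 0 < l <= 1 -> l < delta -> (k <= K l)%nat.
Hypothesis K_ratio : forall l, 0 < l <= 1 -> G (a l) * INR (K l) ^ 2 < G (a l * grid (K l)).

Definition cutoff (l : R) : nat := nat_floor (INR (K l) / G (a l * grid (K l))).

Let a_gt0 l : 0 < l <= 1 -> 0 < a l := fun hl => proj1 (a_spec l hl).

Let scaled_ge0 l k : 0 < l <= 1 -> 0 <= a l * grid k.
Proof. intros hl. apply Rmult_le_pos; [now apply Rlt_le, a_gt0|apply grid_ge0]. Qed.

Let G_scaled_gt0 l : 0 < l <= 1 -> 0 < G (a l * grid (K l)).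
Proof. intros hl. now apply G_gt0, scaled_ge0. Qed.

Let cutoff_bounds l : 0 < l <= 1 ->
  INR (K l) / G (a l * grid (K l)) - 1 < INR (cutoff l) <= INR (K l) / G (a l * grid (K l)).
Proof.
intros hl. apply nat_floor_spec.
apply Rmult_le_pos; [apply pos_INR|left; now apply Rinv_0_lt_compat, G_scaled_gt0].
Qed.

Lemma cutoff_antitone l1 l2 : 0 < l1 -> l1 <= l2 -> l2 <= 1 -> (cutoff l2 <= cutoff l1)%nat.
Proof.
intros h1 h12 h2.
assert (hl1 : 0 < l1 <= 1) by lra. assert (hl2 : 0 < l2 <= 1) by lra.
assert (hK : (K l2 <= K l1)%nat) by now apply K_antitone.
assert (hprod : a l2 * grid (K l2) <= a l1 * grid (K l1)).
{ apply Rmult_le_compat; [now apply Rlt_le, a_gt0|apply grid_ge0|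
    now apply a_antitone|now apply grid_le]. }
apply nat_floor_le.
- apply Rmult_le_pos; [apply pos_INR|left; now apply Rinv_0_lt_compat, G_scaled_gt0].
- apply Rmult_le_compat; [apply pos_INR|left; now apply Rinv_0_lt_compat, G_scaled_gt0|
    now apply le_INR|].
  apply Rinv_le_contravar; [now apply G_scaled_gt0|].
  apply G_antitone; [now apply scaled_ge0|exact hprod].
Qed.

Lemma cutoff_unbounded : lim0_infty (fun l => INR (cutoff l)).
Proof.
intros M. assert (hG0 : 0 < G 0) by (apply G_gt0; lra).
destruct (INR_unbounded ((Rabs M + 1) * G 0)) as [k hk].
destruct (K_unbounded k) as [delta [hdelta Hdelta]].
exists delta. split; [exact hdelta|]. intros l hl hld.
assert (hK : INR k <= INR (K l)) by (apply le_INR; auto).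
assert (hGK : G (a l * grid (K l)) <= G 0) by (apply G_antitone; [lra|now apply scaled_ge0]).
assert (hlow : INR (K l) / G 0 <= INR (K l) / G (a l * grid (K l))).
{ apply Rmult_le_compat_l; [apply pos_INR|].
  apply Rinv_le_contravar; [now apply G_scaled_gt0|exact hGK]. }
assert (Rabs M + 1 < INR k / G 0).
{ apply (Rmult_lt_reg_r (G 0)); [exact hG0|].
  unfold Rdiv. rewrite Rmult_assoc, Rinv_l, Rmult_1_r; lra. }
assert (INR k / G 0 <= INR (K l) / G 0).
{ apply Rmult_le_compat_r; [left; now apply Rinv_0_lt_compat|exact hK]. }
generalize (Rle_abs M) (cutoff_bounds l hl). lra.
Qed.

Lemma cutoff_over_n_vanishes : lim0_zero (fun l => INR (cutoff l) / n_of a l).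
Proof.
intros eps heps. assert (hG0 : 0 < G 0) by (apply G_gt0; lra).
destruct (INR_unbounded (2 * G 0 + 2 / eps + 1)) as [k hk].
destruct (K_unbounded k) as [delta [hdelta Hdelta]].
exists delta. split; [exact hdelta|]. intros l hl hld.
set (N := INR (K l)). set (g := G (a l)). set (h := G (a l * grid (K l))).
assert (hN : INR k <= N) by (apply le_INR; auto).
assert (hg : 0 < g) by (apply G_gt0, Rlt_le, a_gt0, hl).
assert (hh : 0 < h) by now apply G_scaled_gt0.
assert (hh0 : h <= G 0) by (apply G_antitone; [lra|now apply scaled_ge0]).
assert (hgN : g * N ^ 2 < h) by exact (K_ratio l hl).
assert (heps2 : 0 < 2 / eps) by (apply Rdiv_lt_0_compat; lra).
assert (hg2 : g < / 2).
{ assert (hN1 : 1 <= N) by lra.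
  assert (g * N * N < N * / 2) by (simpl in hgN; lra).
  assert (g * N < / 2) by nra. nra. }
assert (hn : / g - 1 < n_of a l).
{ unfold n_of. destruct (a_spec l hl) as [_ ->]. fold g.
  destruct (base_Int_part (1 / g)) as [_ hb]. unfold Rdiv in hb. lra. }
assert (hb := ratio_bound (INR (cutoff l)) (n_of a l) g h N (conj hg hg2) hh
  ltac:(lra) (conj (pos_INR _) (proj2 (cutoff_bounds l hl))) hn hgN).
assert (2 / N < eps).
{ apply (Rmult_lt_reg_r N); [lra|]. unfold Rdiv. rewrite Rmult_assoc, Rinv_l by lra.
  assert (2 < eps * N).
  { assert (hN2 : 2 / eps < N) by lra. apply (Rmult_lt_compat_l eps) in hN2; [|lra].
    replace (eps * (2 / eps)) with 2 in hN2 by (field; lra). exact hN2. }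
  lra. }
rewrite Rabs_right; lra.
Qed.

Lemma cutoff_mul_G_unbounded z : 0 <= z < 1 ->
  lim0_infty (fun l => INR (cutoff l) * G (a l * z)).
Proof.
intros [hz0 hz1] M. assert (hG0 : 0 < G 0) by (apply G_gt0; lra).
destruct (grid_eventually_ge z hz1) as [k0 hk0].
destruct (INR_unbounded (Rabs M + G 0)) as [k1 hk1].
destruct (K_unbounded (Nat.max k0 k1)) as [delta [hdelta Hdelta]].
exists delta. split; [exact hdelta|]. intros l hl hld.
assert (hK := Hdelta l hl hld).
assert (hzK : z <= grid (K l)) by (apply hk0; lia).
assert (hK1 : INR k1 <= INR (K l)) by (apply le_INR; lia).
assert (hpa := a_gt0 l hl).
assert (hGK := G_scaled_gt0 l hl).
assert (hGz : 0 < G (a l * z)) by (apply G_gt0; nra).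
assert (hGKz : G (a l * grid (K l)) <= G (a l * z)) by (apply G_antitone; nra).
assert (hGz0 : G (a l * z) <= G 0) by (apply G_antitone; nra).
assert (h1 : (INR (K l) / G (a l * grid (K l)) - 1) * G (a l * z)
             <= INR (cutoff l) * G (a l * z)).
{ apply Rmult_le_compat_r; [lra|]. generalize (cutoff_bounds l hl); lra. }
assert (h2 : INR (K l) <= INR (K l) / G (a l * grid (K l)) * G (a l * z)).
{ unfold Rdiv. rewrite Rmult_assoc.
  rewrite <- (Rmult_1_r (INR (K l))) at 1. apply Rmult_le_compat_l; [apply pos_INR|].
  rewrite <- (Rinv_l (G (a l * grid (K l)))) by lra.
  apply Rmult_le_compat_l; [left; now apply Rinv_0_lt_compat|exact hGKz]. }
generalize (Rle_abs M). nra.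
Qed.

End ScaleSequence.

Theorem mainTheorem3 (Fbar : R -> R) (mS : R) (G : R -> R) (a : R -> R) :
  H_S_infty Fbar mS G ->
  (forall l, 0 < l <= 1 -> 0 < a l /\ l * a l = G (a l)) ->
  exists mm : R -> nat,
    (forall l1 l2, 0 < l1 -> l1 <= l2 -> l2 <= 1 -> (mm l2 <= mm l1)%nat) /\
    lim0_infty (fun l => INR (mm l)) /\
    lim0_zero (fun l => INR (mm l) / n_of a l) /\
    (forall z, 0 <= z < 1 -> lim0_infty (fun l => INR (mm l) * G (a l * z))).
Proof.
intros [[Fbar_antitone _] [Fbar_gt0 [Fbar_mean [G_tail G_ratio]]]] a_spec.
pose proof (nu_tail_gt0 Fbar mS G Fbar_gt0 Fbar_antitone Fbar_mean G_tail) as G_gt0.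
pose proof (nu_tail_antitone Fbar mS G Fbar_gt0 Fbar_antitone Fbar_mean G_tail) as G_anti.
destruct (slow_index G a G_gt0 G_anti a_spec G_ratio) as [K [K_anti [K_unb K_ratio]]].
exists (cutoff G a K). split; [|split; [|split]].
- exact (cutoff_antitone G a G_gt0 G_anti a_spec K K_anti).
- exact (cutoff_unbounded G a G_gt0 G_anti a_spec K K_unb).
- exact (cutoff_over_n_vanishes G a G_gt0 G_anti a_spec K K_unb K_ratio).
- intros z hz. exact (cutoff_mul_G_unbounded G a G_gt0 G_anti a_spec K K_unb z hz).
Qed.
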